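(* In the setting below, for every $\varphi\in X_N$ and $x\in\mathbb{T}_N$: (i) $0\le(\Pi_x\varphi,\varphi)_+\le\sum_{y\in Q_-+x}(A\nabla\varphi(y),\nabla\varphi(y))$; (ii) $0\le(\mathcal{T}\varphi,\varphi)_+\le(\varphi,\varphi)_+$, and both inequalities are strict if $\varphi\ne0$; (iii) $(\mathcal{T}\varphi,\mathcal{T}\varphi)_+\le(\mathcal{T}\varphi,\varphi)_+$.
   Context: Standing: $d\ge2$, $m\ge1$, $L\ge3$ odd, $N\ge1$. $\mathbb{T}_N=(\mathbb{Z}/L^N\mathbb{Z})^d$. $X_N$: maps $\mathbb{T}_N\to\mathbb{R}^m$ with zero sum. $(\nabla_j\varphi)(x)=\varphi(x+e_j)-\varphi(x)$, $\nabla\varphi(x)\in\mathbb{R}^{m\times d}$. $A:\mathbb{R}^{m\times d}\to\mathbb{R}^{m\times d}$ linear, symmetric w.r.t. Frobenius inner product $(\cdot,\cdot)$, $(AF,F)\ge c_0|F|^2$, $c_0>0$; $(\varphi,\psi)_+=\sum_x(A\nabla\varphi(x),\nabla\psi(x))$. Let $l\ge3$ be an integer with $l-1<L^N$; $Q=\{1,\dots,l-1\}^d$, $Q_-=\{0,\dots,l-1\}^d$ in $\mathbb{T}_N$. $\Pi_x$ is the $(\cdot,\cdot)_+$-orthogonal projection of $X_N$ onto $\{\varphi\in X_N:\varphi=0\text{ outside }Q+x\}$; $\mathcal{T}=l^{-d}\sum_{x\in\mathbb{T}_N}\Pi_x$. *)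

From mathcomp Require Import all_boot all_order all_algebra.
From Stdlib Require Import ClassicalEpsilon.
Set Implicit Arguments. Unset Strict Implicit. Unset Printing Implicit Defensive.
Import Order.TTheory GRing.Theory Num.Theory.
Local Open Scope ring_scope.

(* Points of the torus (Z / n Z)^d, as row vectors over 'Z_n (n = L^N >= 3). *)
Definition pt (d n : nat) := 'rV['Z_n]_d.

Definition field (R : realFieldType) (d n m : nat) := {ffun pt d n -> 'cV[R]_m}.

Definition unitv (d n : nat) (j : 'I_d) : pt d n := delta_mx 0 j.

Definition frob (R : realFieldType) (m d : nat) (F G : 'M[R]_(m, d)) : R :=
  \sum_(i < m) \sum_(j < d) F i j * G i j.

Definition grad (R : realFieldType) (d n m : nat) (phi : field R d n m)
  (x : pt d n) : 'M[R]_(m, d) :=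
  \matrix_(a < m, j < d) (phi (x + unitv n j) a 0 - phi x a 0).

Definition in_X (R : realFieldType) (d n m : nat) (phi : field R d n m) : Prop :=
  \sum_(x : pt d n) phi x = 0.

Definition ipA (R : realFieldType) (d n m : nat)
  (A : 'M[R]_(m, d) -> 'M[R]_(m, d)) (phi psi : field R d n m) : R :=
  \sum_(x : pt d n) frob (A (grad phi x)) (grad psi x).

(* Q = {1,...,l-1}^d and Q_- = {0,...,l-1}^d, embedded in the torus
   (injectively since l-1 < n). *)
Definition inQ (d n : nat) (l : nat) (y : pt d n) : bool :=
  [forall i : 'I_d, (1 <= (y ord0 i : nat) <= l - 1)%N].
Definition inQminus (d n : nat) (l : nat) (y : pt d n) : bool :=
  [forall i : 'I_d, ((y ord0 i : nat) <= l - 1)%N].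

Definition in_Vx (R : realFieldType) (d n m : nat) (l : nat) (x : pt d n)
  (psi : field R d n m) : Prop :=
  in_X psi /\ forall y : pt d n, ~~ inQ l (y - x) -> psi y = 0.

Definition is_proj (R : realFieldType) (d n m : nat)
  (A : 'M[R]_(m, d) -> 'M[R]_(m, d)) (l : nat) (x : pt d n)
  (phi psi : field R d n m) : Prop :=
  in_Vx l x psi /\ forall eta, in_Vx l x eta -> ipA A (phi - psi) eta = 0.

Definition Pi (R : realFieldType) (d n m : nat)
  (A : 'M[R]_(m, d) -> 'M[R]_(m, d)) (l : nat) (x : pt d n)
  (phi : field R d n m) : field R d n m :=
  epsilon (inhabits 0) (is_proj A l x phi).

Definition TT (R : realFieldType) (d n m : nat)
  (A : 'M[R]_(m, d) -> 'M[R]_(m, d)) (l : nat)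
  (phi : field R d n m) : field R d n m :=
  ((l%:R : R) ^- d) *: \sum_(x : pt d n) Pi A l x phi.

From HB Require Import structures.
From mathcomp Require Import all_boot all_order all_algebra zify lra.
From Stdlib Require Import ClassicalEpsilon.
Set Implicit Arguments. Unset Strict Implicit. Unset Printing Implicit Defensive.
Import Order.TTheory GRing.Theory Num.Theory.
Local Open Scope ring_scope.

(* [Pi_x] projects onto the zero-sum fields vanishing outside [Q + x], whose
   gradients live in the box [Q_- + x]; Pythagoras for [phi = Pi_x phi +
   (phi - Pi_x phi)] restricted to that box gives (i).  Every point lies in at
   most [l^d] boxes, so averaging (i) over [x] gives [0 <= T <= 1]; with [T]
   self-adjoint this yields [T^2 <= T], i.e. (iii).  Strictness: if
   [(T phi, phi)_+ = 0] then [phi] is orthogonal to every such space, which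
   contains the differences of point masses in a box, so [phi] is constant;
   if [(T phi, phi)_+ = (phi, phi)_+] then [phi - Pi_x phi] has no gradient at
   [x], while [Pi_x phi] vanishes at [x] and [x + e_j] (outside [Q + x] since
   [d >= 2]), so again [phi] is shift invariant.  Zero sum then forces
   [phi = 0]. *)

Section SymmetricBilinear.
Variables (R : comNzRingType) (V : lmodType R) (B : V -> V -> R).
Hypothesis BDr : forall u v w, B u (v + w) = B u v + B u w.
Hypothesis BZr : forall c u v, B u (c *: v) = c * B u v.
Hypothesis Bsym : forall u v, B u v = B v u.

Lemma sym_form0r u : B u 0 = 0.
Proof. by have := BZr 0 u 0; rewrite scale0r mul0r. Qed.

Lemma sym_formNr u v : B u (- v) = - B u v.
Proof. by rewrite -scaleN1r BZr mulN1r. Qed.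

Lemma sym_formBr u v w : B u (v - w) = B u v - B u w.
Proof. by rewrite BDr sym_formNr. Qed.

Lemma sym_formDl u v w : B (u + v) w = B u w + B v w.
Proof. by rewrite !(Bsym _ w) BDr. Qed.

Lemma sym_formZl c u v : B (c *: u) v = c * B u v.
Proof. by rewrite !(Bsym _ v) BZr. Qed.

Lemma sym_formBl u v w : B (u - v) w = B u w - B v w.
Proof. by rewrite !(Bsym _ w) sym_formBr. Qed.

Lemma sym_form_suml I (r : seq I) (P : pred I) (f : I -> V) w :
  B (\sum_(i <- r | P i) f i) w = \sum_(i <- r | P i) B (f i) w.
Proof.
by apply: (big_morph (B^~ w)) => [u v|]; rewrite ?sym_formDl // Bsym sym_form0r.
Qed.

Lemma sym_form_sumr I (r : seq I) (P : pred I) (f : I -> V) w :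
  B w (\sum_(i <- r | P i) f i) = \sum_(i <- r | P i) B w (f i).
Proof. by rewrite Bsym sym_form_suml; apply: eq_bigr => i _; rewrite Bsym. Qed.

End SymmetricBilinear.

Section OrthogonalProjection.
Variables (F : fieldType) (vT : vectType F) (B : vT -> vT -> F).
Hypothesis BDr : forall u v w, B u (v + w) = B u v + B u w.
Hypothesis BZr : forall c u v, B u (c *: v) = c * B u v.
Hypothesis Bsym : forall u v, B u v = B v u.

Definition orth_proj_on (W : {vspace vT}) (v p : vT) :=
  p \in W /\ {in W, forall w, B (v - p) w = 0}.

Variable U : {vspace vT}.
Hypothesis B_definite : {in U, forall u, B u u = 0 -> u = 0}.

Lemma orth_proj_addv W z : (W <= U)%VS -> z \in U ->
  (forall v, exists p, orth_proj_on W v p) ->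
  forall v, exists p, orth_proj_on (W + <[z]>)%VS v p.
Proof.
move=> sWU zU projW v.
have [pz [pzW pz_orth]] := projW z; have [pv [pvW pv_orth]] := projW v.
set r := z - pz; have rU : r \in U by rewrite memvB // (subvP sWU).
have r_orth : {in W, forall w, B r w = 0} by [].
have [rr0 | rr_neq0] := eqVneq (B r r) 0.
  have zW : z \in W by rewrite -(subrK pz z) -/r (B_definite rU rr0) add0r.
  by rewrite (addv_idPl zW); exists pv.
pose c := B (v - pv) r / B r r.
have resE : v - (pv + c *: r) = (v - pv) - c *: r by rewrite opprD addrA.
have res_orthW : {in W, forall w, B (v - (pv + c *: r)) w = 0}.
  move=> w wW; rewrite resE sym_formBl // sym_formZl //.
  by rewrite pv_orth // r_orth // mulr0 subr0.
have res_orthr : B (v - (pv + c *: r)) r = 0.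
  by rewrite resE sym_formBl // sym_formZl // mulfVK // subrr.
exists (pv + c *: r); split.
  have zWz : z \in (W + <[z]>)%VS := subvP (addvSr W _) _ (memv_line z).
  by rewrite memvD ?memvZ ?memvB ?zWz // (subvP (addvSl W _)).
move=> w /memv_addP [b bW [y /vlineP [k ->] ->]].
have -> : k *: z = k *: r + k *: pz by rewrite -scalerDr subrK.
by rewrite !BDr !BZr res_orthr (res_orthW _ bW) (res_orthW _ pzW) !mulr0 !addr0.
Qed.

Lemma orth_proj_span s : {subset s <= U} ->
  forall v, exists p, orth_proj_on <<s>>%VS v p.
Proof.
elim: s => [_ v | z s IH sU].
  exists 0; split; first by rewrite span_nil mem0v.
  by move=> w; rewrite span_nil memv0 => /eqP ->; rewrite sym_form0r.
have sU' : {subset s <= U} by move=> u us; apply: sU; rewrite inE us orbT.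
rewrite span_cons addvC; apply: orth_proj_addv (IH sU'); first exact/span_subvP.
by apply: sU; rewrite inE eqxx.
Qed.

Lemma orth_proj_exists v : exists p, orth_proj_on U v p.
Proof.
rewrite -(span_basis (vbasisP U)).
by apply: orth_proj_span => u /vbasis_mem.
Qed.

Lemma orth_proj_unique v p q :
  orth_proj_on U v p -> orth_proj_on U v q -> p = q.
Proof.
move=> [pU p_orth] [qU q_orth]; apply/eqP; rewrite -subr_eq0; apply/eqP.
have pqU : p - q \in U by rewrite memvB.
apply: B_definite => //.
have pqE : p - q = (v - q) - (v - p) by rewrite [RHS]addrC opprB addrA subrK.
by rewrite {1}pqE sym_formBl // p_orth // q_orth // subrr.
Qed.

Variable pr : vT -> vT.
Hypothesis pr_spec : forall v, orth_proj_on U v (pr v).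

Lemma orth_projB u v : pr (u - v) = pr u - pr v.
Proof.
have [[puU pu_orth] [pvU pv_orth]] := (pr_spec u, pr_spec v).
apply: (orth_proj_unique (pr_spec (u - v))); split; first by rewrite memvB.
move=> w wU; have /eqP := pu_orth w wU; have /eqP := pv_orth w wU.
by rewrite !sym_formBl // !subr_eq0 => /eqP-> /eqP->; rewrite subrr.
Qed.

Lemma orth_proj_adjoint u v : B (pr u) v = B (pr u) (pr v).
Proof.
have [puU _] := pr_spec u; have [_ pv_orth] := pr_spec v.
by apply/eqP; rewrite -subr_eq0 -sym_formBr // Bsym pv_orth.
Qed.

Variable C : vT -> vT -> F.
Hypothesis CDr : forall u v w, C u (v + w) = C u v + C u w.
Hypothesis Csym : forall u v, C u v = C v u.
Hypothesis CB : forall w, {in U, forall p, C w p = B w p}.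

Lemma orth_proj_split v : C v v = B (pr v) v + C (v - pr v) (v - pr v).
Proof.
have [pU p_orth] := pr_spec v.
set p := pr v; set r := v - p.
have -> : C v v = C (p + r) (p + r) by rewrite subrKC.
rewrite CDr !(sym_formDl CDr Csym p r) (Csym p r) (CB p pU) (CB r pU) p_orth //.
by rewrite add0r addr0 -(orth_proj_adjoint v v).
Qed.

End OrthogonalProjection.

Section FrobeniusForm.
Variables (R : realFieldType) (m d : nat).
Implicit Types F G : 'M[R]_(m, d).

Lemma frobC F G : frob F G = frob G F.
Proof. by apply: eq_bigr => i _; apply: eq_bigr => j _; rewrite mulrC. Qed.

Lemma frobDr F G G' : frob F (G + G') = frob F G + frob F G'.
Proof.
rewrite /frob -big_split; apply: eq_bigr => i _; rewrite -big_split.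
by apply: eq_bigr => j _; rewrite mxE mulrDr.
Qed.

Lemma frobZr a F G : frob F (a *: G) = a * frob F G.
Proof.
rewrite /frob mulr_sumr; apply: eq_bigr => i _; rewrite mulr_sumr.
by apply: eq_bigr => j _; rewrite mxE mulrCA.
Qed.

Lemma frob0r F : frob F 0 = 0.
Proof. by have := frobZr 0 F 0; rewrite scale0r mul0r. Qed.

Lemma frob_ge0 F : 0 <= frob F F.
Proof. by apply: sumr_ge0 => i _; apply: sumr_ge0 => j _; rewrite -expr2 sqr_ge0. Qed.

Lemma frob_eq0 F : frob F F = 0 -> F = 0.
Proof.
have sq_ge0 i j : 0 <= F i j * F i j by rewrite -expr2 sqr_ge0.
move=> /psumr_eq0P F0; apply/matrixP => i j; rewrite mxE.
have /psumr_eq0P Fi0 := F0 (fun i _ => sumr_ge0 _ (fun j _ => sq_ge0 i j)) i isT.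
have {}Fi0 := Fi0 (fun j _ => sq_ge0 i j) j isT.
by apply/eqP; rewrite -sqrf_eq0 expr2 Fi0.
Qed.

Variables (A : 'M[R]_(m, d) -> 'M[R]_(m, d)) (c0 : R).
Hypothesis c0_gt0 : 0 < c0.
Hypothesis A_elliptic : forall F, c0 * frob F F <= frob (A F) F.

Lemma frobA_ge0 F : 0 <= frob (A F) F.
Proof. exact: le_trans (mulr_ge0 (ltW c0_gt0) (frob_ge0 F)) (A_elliptic F). Qed.

Lemma frobA_eq0 F : frob (A F) F = 0 -> F = 0.
Proof.
move=> AF0; apply: frob_eq0; apply/eqP; rewrite eq_le frob_ge0 andbT.
by rewrite -(pmulr_rle0 _ c0_gt0) -AF0 A_elliptic.
Qed.

End FrobeniusForm.

Section Gradient.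
Variables (R : realFieldType) (d n m : nat).
Implicit Types u v : field R d n m.

Lemma gradD u v y : grad (u + v) y = grad u y + grad v y.
Proof. by apply/matrixP => a j; rewrite !mxE !ffunE !mxE addrACA opprD. Qed.

Lemma gradZ c u y : grad (c *: u) y = c *: grad u y.
Proof. by apply/matrixP => a j; rewrite !mxE !ffunE !mxE mulrBr. Qed.

Lemma grad_eq0_shift u y j : grad u y = 0 -> u (y + unitv n j) = u y.
Proof.
move=> /matrixP u0; apply/matrixP => a b; rewrite (ord1 b).
by have := u0 a j; rewrite !mxE => /eqP; rewrite subr_eq0 => /eqP.
Qed.

Variable A : 'M[R]_(m, d) -> 'M[R]_(m, d).

Definition ipA_on (P : pred (pt d n)) u v :=
  \sum_(y | P y) frob (A (grad u y)) (grad v y).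

Lemma ipA_onDr P u v w : ipA_on P u (v + w) = ipA_on P u v + ipA_on P u w.
Proof. by rewrite -big_split; apply: eq_bigr => y _; rewrite gradD frobDr. Qed.

Lemma ipA_onZr P c u v : ipA_on P u (c *: v) = c * ipA_on P u v.
Proof. by rewrite mulr_sumr; apply: eq_bigr => y _; rewrite gradZ frobZr. Qed.

Hypothesis A_sym : forall F G, frob (A F) G = frob F (A G).

Lemma ipA_on_sym P u v : ipA_on P u v = ipA_on P v u.
Proof. by apply: eq_bigr => y _; rewrite A_sym frobC. Qed.

Variable c0 : R.
Hypothesis c0_gt0 : 0 < c0.
Hypothesis A_elliptic : forall F, c0 * frob F F <= frob (A F) F.

Lemma ipA_on_ge0 P u : 0 <= ipA_on P u u.
Proof. by apply: sumr_ge0 => y _; exact: (frobA_ge0 c0_gt0 A_elliptic). Qed.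

Lemma ipA_on_eq0 P u : ipA_on P u u = 0 -> {in P, forall y, grad u y = 0}.
Proof.
move=> u0 y Py; apply: (frobA_eq0 c0_gt0 A_elliptic); move: y Py.
by apply: psumr_eq0P u0 => z _; exact: (frobA_ge0 c0_gt0 A_elliptic).
Qed.

End Gradient.

Section TorusBoxes.
Variables (d n : nat).
Hypothesis n_gt2 : (2 < n)%N.
Local Notation P := (pt d n).

Lemma coordD (y z : P) i :
  nat_of_ord ((y + z) ord0 i) = ((nat_of_ord (y ord0 i) + z ord0 i) %% n)%N.
Proof. by rewrite mxE /=; congr (_ %% _)%N; apply: Zp_cast; apply: ltnW. Qed.

Lemma coord_lt (y : P) i : (nat_of_ord (y ord0 i) < n)%N.
Proof. by apply: leq_trans (ltn_ord _) _; rewrite Zp_cast // ltnW. Qed.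

Lemma coord_unitv j i : nat_of_ord ((unitv n j : P) ord0 i) = (i == j).
Proof.
rewrite /unitv mxE eqxx /= val_Zp_nat ?(ltn_trans _ n_gt2) //.
by case: (i == j); rewrite ?mod0n // modn_small // (ltn_trans _ n_gt2).
Qed.

Lemma coord_ones i : nat_of_ord ((const_mx 1 : P) ord0 i) = 1%N.
Proof. by rewrite mxE -[1]/(1%:R) val_Zp_nat ?modn_small // (ltn_trans _ n_gt2). Qed.

Lemma pt_sum_unitv (y : P) : y = \sum_(j < d) unitv n j *+ y ord0 j.
Proof.
apply/matrixP => i0 i; rewrite summxE (ord1 i0) (bigD1 i) //= big1 => [|j /negbTE ji].
  by rewrite addr0 mulmxnE /unitv mxE !eqxx /= natr_Zp.
by rewrite mulmxnE /unitv mxE eqxx /= eq_sym ji mul0rn.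
Qed.

Lemma shift_invariant_const (T : Type) (f : P -> T) :
  (forall (y : P) j, f (y + unitv n j) = f y) -> forall y, f y = f 0.
Proof.
move=> f_inv.
have f_invn y j k : f (y + unitv n j *+ k) = f y.
  by elim: k => [|k IHk]; rewrite ?mulr0n ?addr0 // mulrS addrCA addrC f_inv.
move=> y; rewrite (pt_sum_unitv y).
elim: (index_enum _) => [|j s IHs]; first by rewrite big_nil.
by rewrite big_cons addrC f_invn.
Qed.

Variable l : nat.

Lemma inQ_inQminus (z : P) : inQ l z -> inQminus l z.
Proof. by move=> /forallP zQ; apply/forallP => i; case/andP: (zQ i). Qed.

Lemma inQ_shift_inQminus (z : P) j :
  (l - 1 < n)%N -> inQ l (z + unitv n j) -> inQminus l z.
Proof.
move=> l_lt /forallP zjQ; apply/forallP => i.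
have := zjQ i; rewrite coordD coord_unitv.
have z_lt := coord_lt z i.
case: (i == j) => /=; last by rewrite addn0 modn_small // => /andP [].
rewrite addn1; case: (ltngtP (z ord0 i).+1 n) => [lt | | eq].
- by rewrite modn_small // => /andP [_ /ltnW].
- by rewrite ltnNge z_lt.
- by rewrite eq modnn.
Qed.

Lemma inQ0 : (0 < d)%N -> ~~ inQ l (0 : P).
Proof. by move=> d_gt0; apply/forallP => /(_ (Ordinal d_gt0)); rewrite mxE. Qed.

Lemma inQ_unitv j : (1 < d)%N -> ~~ inQ l (unitv n j : P).
Proof.
move=> d_gt1; have [i ij] : exists i : 'I_d, i != j.
  have [j0 | j_neq0] := eqVneq (nat_of_ord j) 0%N.
    by exists (Ordinal d_gt1); rewrite -val_eqE /= j0.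
  by exists (Ordinal (ltnW d_gt1)); rewrite -val_eqE /= eq_sym.
by apply/forallP => /(_ i); rewrite coord_unitv (negbTE ij).
Qed.

Lemma inQ_ones : (2 < l)%N -> inQ l (const_mx 1 : P).
Proof. by move=> l_gt2; apply/forallP => i; rewrite coord_ones /=; lia. Qed.

Lemma inQ_ones_unitv j : (2 < l)%N -> inQ l (const_mx 1 + unitv n j : P).
Proof.
move=> l_gt2; apply/forallP => i; rewrite coordD coord_ones coord_unitv.
by rewrite modn_small; case: (i == j) => //=; lia.
Qed.

Lemma inQminus0 : inQminus l (0 : P).
Proof. by apply/forallP => i; rewrite mxE. Qed.

Lemma card_inQminus_sub (y : P) : (0 < l)%N ->
  (#|[pred x : P | inQminus l (y - x)%R]| <= l ^ d)%N.
Proof.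
move=> l_gt0.
pose g (x : P) : {ffun 'I_d -> 'I_(l.-1).+1} :=
  [ffun i => inord (nat_of_ord ((y - x) ord0 i))].
have g_inj : {in [pred x : P | inQminus l (y - x)] &, injective g}.
  move=> x1 x2 /forallP x1Q /forallP x2Q /ffunP g12.
  suff : y - x1 = y - x2 by move/addrI/oppr_inj.
  apply/matrixP => i0 i; rewrite (ord1 i0); apply/val_inj.
  have := g12 i; rewrite !ffunE => /(congr1 val).
  rewrite /= !inordK // ltnS -subn1; by [apply: x1Q | apply: x2Q].
rewrite -(card_in_imset g_inj); apply: leq_trans (max_card _) _.
by rewrite card_ffun !card_ord prednK.
Qed.

End TorusBoxes.

Section LocalProjections.
Variables (R : realFieldType) (d n m : nat).
Variable A : 'M[R]_(m, d) -> 'M[R]_(m, d).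
Hypothesis A_sym : forall F G, frob (A F) G = frob F (A G).
Variable c0 : R.
Hypothesis c0_gt0 : 0 < c0.
Hypothesis A_elliptic : forall F, c0 * frob F F <= frob (A F) F.
Variable l : nat.
Hypothesis d_gt1 : (1 < d)%N.
Hypothesis n_gt2 : (2 < n)%N.
Hypothesis l_gt2 : (2 < l)%N.
Hypothesis l_lt_n : (l - 1 < n)%N.
Local Notation F := (field R d n m).
Local Notation P := (pt d n).
Implicit Types u v p : F.

Lemma ipA_Dr u v w : ipA A u (v + w) = ipA A u v + ipA A u w.
Proof. exact: ipA_onDr. Qed.

Lemma ipA_Zr c u v : ipA A u (c *: v) = c * ipA A u v.
Proof. exact: ipA_onZr. Qed.

Lemma ipA_sym u v : ipA A u v = ipA A v u.
Proof. exact: ipA_on_sym. Qed.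

Lemma ipA_ge0 u : 0 <= ipA A u u.
Proof. exact: ipA_on_ge0 c0_gt0 A_elliptic _ _. Qed.

Lemma zero_sum_shift_invariant u :
  in_X u -> (forall (y : P) j, u (y + unitv n j) = u y) -> u = 0.
Proof.
move=> u_sum0 u_inv; have u_const := shift_invariant_const u_inv.
have u00 : u 0 = 0.
  have P_gt0 : (0 < #|P|)%N by apply/card_gt0P; exists 0.
  move: u_sum0; rewrite /in_X (eq_bigr _ (fun y _ => u_const y)) sumr_const.
  by move/eqP; rewrite -scaler_nat scaler_eq0 pnatr_eq0 eqn0Ngt P_gt0 => /eqP.
by apply/ffunP => y; rewrite u_const u00 ffunE.
Qed.

Lemma ipA_definite u : in_X u -> ipA A u u = 0 -> u = 0.
Proof.
move=> u_sum0 /(ipA_on_eq0 c0_gt0 A_elliptic) grad_u0.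
by apply: zero_sum_shift_invariant => // y j; apply: grad_eq0_shift; apply: grad_u0.
Qed.

Definition box_constraints (x : P) (u : F) : F * 'cV[R]_m :=
  ([ffun y => if inQ l (y - x) then 0 else u y], \sum_y u y).

Lemma box_constraints_is_linear x : linear (box_constraints x).
Proof.
move=> c u v; congr (_, _).
  by apply/ffunP => y; rewrite !ffunE; case: ifP; rewrite ?scaler0 ?addr0 // !ffunE.
by rewrite /= scaler_sumr -big_split; apply: eq_bigr => y _; rewrite !ffunE.
Qed.

HB.instance Definition _ x := GRing.isLinear.Build R F (F * 'cV[R]_m)%type _
  (box_constraints x) (box_constraints_is_linear x).

Definition Vx (x : P) : {vspace F} := lker (linfun (box_constraints x)).

Lemma in_VxP x u : reflect (in_Vx l x u) (u \in Vx x).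
Proof.
rewrite memv_ker lfunE /= /box_constraints xpair_eqE /in_Vx /in_X.
apply: (iffP andP) => [[/eqP/ffunP u_out /eqP u_sum0] | [u_sum0 u_out]].
  by split=> // y yQ; have := u_out y; rewrite !ffunE (negbTE yQ).
split; apply/eqP => //; apply/ffunP => y; rewrite !ffunE.
by case: ifPn => // /u_out.
Qed.

Lemma ipA_definite_Vx x : {in Vx x, forall u, ipA A u u = 0 -> u = 0}.
Proof. by move=> u /in_VxP [u_sum0 _]; apply: ipA_definite. Qed.

Lemma Pi_spec x u : orth_proj_on (ipA A) (Vx x) u (Pi A l x u).
Proof.
have [Vx_Pi Pi_orth] : is_proj A l x u (Pi A l x u).
  apply: epsilon_spec.
  have [p [/in_VxP Vx_p p_orth]] :=
    orth_proj_exists ipA_Dr ipA_Zr ipA_sym (ipA_definite_Vx (x := x)) u.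
  by exists p; split=> // w /in_VxP; apply: p_orth.
by split=> [|w /in_VxP /Pi_orth //]; apply/in_VxP.
Qed.

Lemma PiB x u v : Pi A l x (u - v) = Pi A l x u - Pi A l x v.
Proof.
exact: (orth_projB ipA_Dr ipA_Zr ipA_sym (ipA_definite_Vx (x := x)) (Pi_spec x) u v).
Qed.

Lemma Pi_adjoint x u v : ipA A (Pi A l x u) v = ipA A (Pi A l x u) (Pi A l x v).
Proof. exact: (orth_proj_adjoint ipA_Dr ipA_Zr ipA_sym (Pi_spec x) u v). Qed.

Definition box (x : P) := [pred y : P | inQminus l (y - x)].

Lemma Vx_grad_box x p y : p \in Vx x -> y \notin box x -> grad p y = 0.
Proof.
move=> /in_VxP [_ p_out] y_out; apply/matrixP => a j; rewrite !mxE.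
rewrite p_out; last first.
  by apply: contra y_out; rewrite addrAC inE; apply: inQ_shift_inQminus.
by rewrite p_out ?subrr ?mxE //; apply: contra y_out; rewrite inE; apply: inQ_inQminus.
Qed.

Lemma ipA_box x u p : p \in Vx x -> ipA A u p = ipA_on A (box x) u p.
Proof.
move=> Vx_p; rewrite /ipA (bigID (box x)) /= [X in _ + X]big1 ?addr0 // => y y_out.
by rewrite (Vx_grad_box Vx_p y_out) frob0r.
Qed.

Lemma Pi_box_split x u : ipA_on A (box x) u u =
  ipA A (Pi A l x u) u + ipA_on A (box x) (u - Pi A l x u) (u - Pi A l x u).
Proof.
apply: (orth_proj_split ipA_Dr ipA_Zr ipA_sym (Pi_spec x) (@ipA_onDr _ _ _ _ A _)).
  exact: ipA_on_sym.
by move=> w p /ipA_box ->.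
Qed.

Lemma Pi_ge0 x u : 0 <= ipA A (Pi A l x u) u.
Proof. by rewrite Pi_adjoint ipA_ge0. Qed.

Lemma Pi_le_box x u : ipA A (Pi A l x u) u <= ipA_on A (box x) u u.
Proof. by rewrite Pi_box_split lerDl (ipA_on_ge0 c0_gt0 A_elliptic). Qed.

Local Notation kappa := ((l%:R : R) ^- d).

Lemma kappa_gt0 : 0 < kappa.
Proof. by rewrite invr_gt0 exprn_gt0 // ltr0n (ltn_trans _ l_gt2). Qed.

Lemma kappa_mulrn a : kappa * (a *+ l ^ d) = a.
Proof.
rewrite -[a *+ _]mulr_natr natrX mulrCA mulVf ?mulr1 //.
by rewrite expf_neq0 // pnatr_eq0 -lt0n (ltn_trans _ l_gt2).
Qed.

Lemma ipA_TT u v : ipA A (TT A l u) v = kappa * \sum_x ipA A (Pi A l x u) v.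
Proof.
by rewrite /TT (sym_formZl ipA_Zr ipA_sym) (sym_form_suml ipA_Dr ipA_Zr ipA_sym).
Qed.

Lemma TT_adjoint u v : ipA A (TT A l u) v = ipA A (TT A l v) u.
Proof.
rewrite !ipA_TT; congr (_ * _); apply: eq_bigr => x _.
by rewrite Pi_adjoint ipA_sym -Pi_adjoint.
Qed.

Lemma TTB u v : TT A l (u - v) = TT A l u - TT A l v.
Proof.
by rewrite /TT -scalerBr -sumrB; congr (_ *: _); apply: eq_bigr => x _; rewrite PiB.
Qed.

Lemma sum_box_le u : \sum_x ipA_on A (box x) u u <= ipA A u u *+ l ^ d.
Proof.
rewrite (exchange_big_dep predT) //= /ipA -sumrMnl; apply: ler_sum => y _.
rewrite (eq_bigl (mem [pred x : P | inQminus l (y - x)])) // sumr_const.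
apply: ler_wpMn2l; first exact: (frobA_ge0 c0_gt0 A_elliptic).
by apply: card_inQminus_sub; apply: ltn_trans l_gt2.
Qed.

Lemma TT_box_split u : ipA A (TT A l u) u +
    kappa * \sum_x ipA_on A (box x) (u - Pi A l x u) (u - Pi A l x u)
  = kappa * \sum_x ipA_on A (box x) u u.
Proof.
rewrite ipA_TT -mulrDr -big_split; congr (_ * _).
by apply: eq_bigr => x _; rewrite (Pi_box_split x u).
Qed.

Lemma box_average_le u : kappa * \sum_x ipA_on A (box x) u u <= ipA A u u.
Proof.
rewrite -[leRHS](kappa_mulrn (ipA A u u)) ler_wpM2l ?sum_box_le //.
exact: ltW kappa_gt0.
Qed.

Lemma TT_ge0 u : 0 <= ipA A (TT A l u) u.
Proof.
rewrite ipA_TT mulr_ge0 ?(ltW kappa_gt0) //.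
by apply: sumr_ge0 => x _; apply: Pi_ge0.
Qed.

Lemma TT_le u : ipA A (TT A l u) u <= ipA A u u.
Proof.
apply: le_trans (box_average_le u); rewrite -TT_box_split lerDl.
rewrite mulr_ge0 ?(ltW kappa_gt0) //.
by apply: sumr_ge0 => x _; apply: (ipA_on_ge0 c0_gt0 A_elliptic).
Qed.

(* Test [0 <= T] on [u - T u] and use [T] self-adjoint and [T <= 1]. *)
Lemma TT_square_le u : ipA A (TT A l u) (TT A l u) <= ipA A (TT A l u) u.
Proof.
set t := TT A l u.
have := TT_ge0 (u - t); rewrite TTB.
rewrite (sym_formBl ipA_Dr ipA_Zr ipA_sym) !(sym_formBr ipA_Dr ipA_Zr) (TT_adjoint t u).
have := TT_le t; lra.
Qed.

Definition point_mass (z : P) (k : 'I_m) : F :=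
  [ffun y => if y == z then delta_mx k 0 else 0].

Lemma sum_point_mass z k : \sum_y point_mass z k y = delta_mx k 0.
Proof.
rewrite (bigD1 z) //= ffunE eqxx big1 ?addr0 // => y yz.
by rewrite ffunE (negbTE yz).
Qed.

Lemma field_point_mass_sum u : u = \sum_z \sum_(k < m) u z k 0 *: point_mass z k.
Proof.
apply/ffunP => y; rewrite sum_ffunE (bigD1 y) //= [X in _ + X]big1 => [|z zy].
  rewrite addr0 sum_ffunE {1}(matrix_sum_delta (u y)); apply: eq_bigr => k _.
  by rewrite big_ord1 !ffunE eqxx.
by rewrite sum_ffunE big1 // => k _; rewrite !ffunE eq_sym (negbTE zy) scaler0.
Qed.

Lemma point_mass_diff_Vx x a b k : inQ l (a - x) -> inQ l (b - x) ->
  point_mass a k - point_mass b k \in Vx x.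
Proof.
move=> aQ bQ; apply/in_VxP; split.
  rewrite /in_X (eq_bigr (fun y => point_mass a k y - point_mass b k y)).
    by rewrite sumrB !sum_point_mass subrr.
  by move=> y _; rewrite !ffunE.
move=> y yQ; rewrite !ffunE.
have [ya yb] : (y == a) = false /\ (y == b) = false.
  by split; apply: contraNF yQ => /eqP ->.
by rewrite ya yb subrr.
Qed.

(* [z] and [z + e_j] both lie in [Q + (z - 1)], so [z |-> (u, point_mass z k)_+]
   is shift invariant; being constant, it pairs to [0] with the zero-sum [u]. *)
Lemma orth_boxes_eq0 u :
  in_X u -> (forall x, {in Vx x, forall eta, ipA A u eta = 0}) -> u = 0.
Proof.
move=> u_sum0 u_orth.
pose G k z := ipA A u (point_mass z k).
have G_inv k z j : G k (z + unitv n j) = G k z.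
  apply/eqP; rewrite -subr_eq0 -(sym_formBr ipA_Dr ipA_Zr); apply/eqP.
  apply: (u_orth (z - const_mx 1)); apply: point_mass_diff_Vx.
    have -> : z + unitv n j - (z - const_mx 1) = const_mx 1 + unitv n j.
      by rewrite opprB addrC addrA subrK.
    exact: inQ_ones_unitv.
  by rewrite opprB addrC subrK inQ_ones.
have G_const k z : G k z = G k 0 := shift_invariant_const (G_inv k) z.
apply: ipA_definite => //.
transitivity (\sum_z \sum_(k < m) u z k 0 * G k 0).
  rewrite {2}(field_point_mass_sum u) (sym_form_sumr ipA_Dr ipA_Zr ipA_sym).
  apply: eq_bigr => z _; rewrite (sym_form_sumr ipA_Dr ipA_Zr ipA_sym).
  by apply: eq_bigr => k _; rewrite ipA_Zr; congr (_ * _); apply: G_const.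
rewrite exchange_big big1 // => k _; rewrite -mulr_suml.
have -> : \sum_z u z k 0 = (\sum_z u z) k 0 by rewrite summxE.
by rewrite u_sum0 mxE mul0r.
Qed.

Lemma TT_gt0 u : in_X u -> u != 0 -> 0 < ipA A (TT A l u) u.
Proof.
move=> u_sum0 u_neq0; rewrite lt_def TT_ge0 andbT.
apply: contraNneq u_neq0 => TT0; apply/eqP.
have sum0 : \sum_x ipA A (Pi A l x u) u = 0.
  by move: TT0; rewrite ipA_TT => /eqP; rewrite mulf_eq0 gt_eqF ?kappa_gt0 // => /eqP.
have Pi0 x : Pi A l x u = 0.
  have [Vx_Pi _] := Pi_spec x u; apply: ipA_definite_Vx Vx_Pi _.
  by rewrite -Pi_adjoint; apply: (psumr_eq0P (fun x _ => Pi_ge0 x u) sum0).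
apply: orth_boxes_eq0 => // x eta Vx_eta.
by have [_ Pi_orth] := Pi_spec x u; rewrite -(Pi_orth _ Vx_eta) Pi0 subr0.
Qed.

Lemma Pi_corner_eq0 x u j :
  Pi A l x u x = 0 /\ Pi A l x u (x + unitv n j) = 0.
Proof.
have [/in_VxP [_ Pi_out] _] := Pi_spec x u.
split; apply: Pi_out; first by rewrite subrr inQ0 // ltnW.
by rewrite addrAC subrr add0r inQ_unitv.
Qed.

Lemma TT_lt u : in_X u -> u != 0 -> ipA A (TT A l u) u < ipA A u u.
Proof.
move=> u_sum0 u_neq0; rewrite lt_def TT_le andbT.
apply: contraNneq u_neq0 => TT_eq; apply/eqP.
have res_ge0 x : true -> 0 <= ipA_on A (box x) (u - Pi A l x u) (u - Pi A l x u).
  by move=> _; apply: (ipA_on_ge0 c0_gt0 A_elliptic).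
set S := \sum_x ipA_on A (box x) (u - Pi A l x u) (u - Pi A l x u).
have S0 : S = 0.
  have := box_average_le u; rewrite -TT_box_split -TT_eq -/S.
  rewrite gerDl pmulr_rle0 ?kappa_gt0 // => S_le0.
  by apply/eqP; rewrite eq_le S_le0 sumr_ge0.
apply: zero_sum_shift_invariant => // x j.
have res0 := psumr_eq0P res_ge0 S0 (i := x) isT.
have x_box : x \in box x by rewrite inE subrr inQminus0.
have := grad_eq0_shift j (ipA_on_eq0 c0_gt0 A_elliptic res0 x_box).
by have [Pi_x0 Pi_xj0] := Pi_corner_eq0 x u j; rewrite !ffunE Pi_x0 Pi_xj0 !subr0.
Qed.

End LocalProjections.

Theorem lemma3p4 (R : realFieldType) (d m L N l : nat)
  (hd : (2 <= d)%N) (hm : (1 <= m)%N) (hL : (3 <= L)%N) (hLodd : odd L)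
  (hN : (1 <= N)%N) (hl : (3 <= l)%N) (hlN : (l - 1 < L ^ N)%N)
  (A : 'M[R]_(m, d) -> 'M[R]_(m, d)) (hAlin : linear A)
  (hAsym : forall F G, frob (A F) G = frob F (A G))
  (c0 : R) (hc0 : 0 < c0) (hAell : forall F, c0 * frob F F <= frob (A F) F)
  (phi : field R d (L ^ N) m) (hphi : in_X phi) (x : pt d (L ^ N)) :
  (0 <= ipA A (Pi A l x phi) phi /\
   ipA A (Pi A l x phi) phi
     <= \sum_(y : pt d (L ^ N) | inQminus l (y - x))
          frob (A (grad phi y)) (grad phi y))
  /\ (0 <= ipA A (TT A l phi) phi /\ ipA A (TT A l phi) phi <= ipA A phi phi
      /\ (phi != 0 -> 0 < ipA A (TT A l phi) phi
                      /\ ipA A (TT A l phi) phi < ipA A phi phi))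
  /\ ipA A (TT A l phi) (TT A l phi) <= ipA A (TT A l phi) phi.
Proof.
have n_gt2 : (2 < L ^ N)%N by lia.
split; first split.
- exact: (Pi_ge0 hAsym hc0 hAell l x phi).
- exact: (Pi_le_box hAsym hc0 hAell n_gt2 hlN x phi).
split; last exact: (TT_square_le hAsym hc0 hAell n_gt2 hl hlN phi).
split; first exact: (TT_ge0 hAsym hc0 hAell hl phi).
split; first exact: (TT_le hAsym hc0 hAell n_gt2 hl hlN phi).
move=> phi_neq0; split.
- exact: (TT_gt0 hAsym hc0 hAell n_gt2 hl hphi phi_neq0).
- exact: (TT_lt hAsym hc0 hAell hd n_gt2 hl hlN hphi phi_neq0).
Qed.
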